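(* Let $X$ be a $\mathbb{Z}^n$-periodic discrete metric space with orbit representatives $x_1,\dots,x_N$, let $p\in[1,\infty]$, and let $A$ be a band operator on $l^p(X)$. Then $UAU^{-1}$ is a band operator on $l^p(\mathbb{Z}^n,\mathbb{C}^N)$, i.e. it can be written as $\sum_{|\alpha|\le m} a_\alpha V_\alpha$ for some $m$ and some $a_\alpha\in l^\infty(\mathbb{Z}^n,\mathbb{C}^{N\times N})$.
   Context: A discrete metric space is a countable set $X$ with a metric $\rho$ such that every ball $\{x:\rho(x,x_0)\le r\}$ is finite. It is $\mathbb{Z}^n$-periodic if $\mathbb{Z}^n$ acts on $X$, $(\alpha,x)\mapsto\alpha\cdot x$, with $0\cdot x=x$, $(\alpha+\beta)\cdot x=\alpha\cdot(\beta\cdot x)$, $\rho(\alpha\cdot x,\alpha\cdot y)=\rho(x,y)$, the action is free ($\alpha\cdot x=x$ implies $\alpha=0$), and there are finitely many orbits; $x_1,\dots,x_N$ are fixed representatives of the $N$ orbits. $U:l^p(X)\to l^p(\mathbb{Z}^n,\mathbb{C}^N)$ is $(Uf)(\alpha)=(f(\alpha\cdot x_1),\dots,f(\alpha\cdot x_N))$, an isometric isomorphism. On $l^p(\mathbb{Z}^n,\mathbb{C}^N)$, $(V_\alpha u)(x)=u(x-\alpha)$ and $a\in l^\infty(\mathbb{Z}^n,\mathbb{C}^{N\times N})$ acts by $(au)(x)=a(x)u(x)$. A linear operator $A$ on $l^p(X)$ has generating function $k_A:X\times X\to\mathbb{C}$ if $(Au)(x)=\sum_{y\in X}k_A(x,y)u(y)$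 for all finitely supported $u$. $A$ is a band operator on $l^p(X)$ if it has a bounded generating function $k_A$ and there is $R>0$ with $k_A(x,y)=0$ whenever $\rho(x,y)>R$. *)

From HB Require Import structures.
From mathcomp Require Import all_boot all_order all_algebra.
From mathcomp Require Import complex.
From mathcomp Require Import reals exp Rstruct.

Set Implicit Arguments.
Unset Strict Implicit.
Unset Printing Implicit Defensive.

Import Order.TTheory GRing.Theory Num.Theory.
Local Open Scope ring_scope.

Definition RR : realType := Rdefinitions.R.
Definition CC := RR[i].

Definition cabs (z : CC) : RR := ComplexField.Normc.normc z.

Inductive exponent := Pfin of RR | Pinf.
Definition valid_exponent (p : exponent) : Prop :=
  match p with Pfin q => 1 <= q | Pinf => True end.

Definition in_lp (T : eqType) (p : exponent) (f : T -> CC) : Prop :=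
  match p with
  | Pfin q => exists M : RR, forall s : seq T, uniq s ->
                \sum_(x <- s) powR (cabs (f x)) q <= M
  | Pinf => exists M : RR, forall x, cabs (f x) <= M
  end.

Definition finsupp (T : eqType) (V : zmodType) (f : T -> V) : Prop :=
  exists s : seq T, forall x, x \notin s -> f x = 0.

(** A Z^n-periodic discrete metric space, together with fixed orbit
    representatives x_1, ..., x_N (here orep : 'I_N -> X). *)
Record periodic_dms (n : nat) := PeriodicDMS {
  pt :> countType;
  rho : pt -> pt -> RR;
  rho_eq0 : forall x y, rho x y = 0 <-> x = y;
  rho_sym : forall x y, rho x y = rho y x;
  rho_tri : forall x y z, rho x z <= rho x y + rho y z;
  balls_finite : forall (x0 : pt) (r : RR),
      exists s : seq pt, forall x, rho x x0 <= r -> x \in s;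
  act : 'rV[int]_n -> pt -> pt;
  act0 : forall x, act 0 x = x;
  actD : forall a b x, act (a + b) x = act a (act b x);
  act_iso : forall a x y, rho (act a x) (act a y) = rho x y;
  act_free : forall a x, act a x = x -> a = 0;
  norb : nat;
  orep : 'I_norb -> pt;
  orep_cover : forall x : pt,
      exists ai : 'rV[int]_n * 'I_norb, act ai.1 (orep ai.2) == x;
  orep_distinct : forall a i j, act a (orep i) = orep j -> i = j
}.

Section Ops.
Variables (n : nat) (X : periodic_dms n).

Definition lin_op_lp (p : exponent) (A : (X -> CC) -> (X -> CC)) : Prop :=
  (forall f, in_lp p f -> in_lp p (A f)) /\
  (forall (c : CC) f g, in_lp p f -> in_lp p g ->
     A (fun x => c * f x + g x) = (fun x => c * A f x + A g x)).

(** k is a generating function of A: (Au)(x) = sum_y k(x,y) u(y) for every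
    finitely supported u (the sum is written over any duplicate-free list s
    containing the support of u). *)
Definition generating_function (A : (X -> CC) -> (X -> CC))
    (k : X -> X -> CC) : Prop :=
  forall (u : X -> CC) (s : seq X), uniq s -> (forall y, y \notin s -> u y = 0) ->
    forall x, A u x = \sum_(y <- s) k x y * u y.

Definition band_op (p : exponent) (A : (X -> CC) -> (X -> CC)) : Prop :=
  lin_op_lp p A /\
  exists k : X -> X -> CC,
    generating_function A k /\
    (exists M : RR, forall x y, cabs (k x y) <= M) /\
    (exists R : RR, 0 < R /\ forall x y, R < rho x y -> k x y = 0).

Definition Uop (f : X -> CC) : 'rV[int]_n -> 'cV[CC]_(norb X) :=
  fun a => \col_i f (act a (orep i)).

(** U^{-1}: (U^{-1} v)(alpha . x_i) = v(alpha)_i. *)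
Definition Uinv (v : 'rV[int]_n -> 'cV[CC]_(norb X)) : X -> CC :=
  fun x => let ai := xchoose (orep_cover x) in v ai.1 ai.2 ord0.

End Ops.

Arguments Uop {n} X f.
Arguments Uinv {n} X v.
Arguments band_op {n X} p A.

Definition Vsh (n N : nat) (al : 'rV[int]_n) (v : 'rV[int]_n -> 'cV[CC]_N) :
  'rV[int]_n -> 'cV[CC]_N := fun x => v (x - al).

Definition supnorm (n : nat) (al : 'rV[int]_n) : nat := \max_(i < n) `|al ord0 i|%N.

(** l^oo(Z^n, C^{N x N}) (bounded entries; all norms on C^{NxN} are equivalent). *)
Definition linf_mx (n N : nat) (a : 'rV[int]_n -> 'M[CC]_N) : Prop :=
  exists M : RR, forall x i j, cabs (a x i j) <= M.

From HB Require Import structures.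
From mathcomp Require Import all_boot all_order all_algebra.
From mathcomp Require Import complex.
From mathcomp Require Import reals exp Rstruct.
From mathcomp Require Import zify.

(* Write a_al(x)_ij := k(x.x_i, (x - al).x_j) for the kernel k of A.  Since
   the Z^n-action is free and every point is some b.x_j, the matrix entry
   (U A U^-1 v)(x)_i is the sum over b and j of k(x.x_i, b.x_j) v(b)_j.  The
   kernel vanishes when rho(x.x_i, b.x_j) = rho((x - b).x_i, x_j) exceeds the
   band width R, and the (x - b).x_i lying in the finite R-balls around
   x_1, ..., x_N have bounded offsets |x - b| <= m; so only al = x - b in the
   box of radius m contribute. *)

Set Implicit Arguments.
Unset Strict Implicit.
Unset Printing Implicit Defensive.

Import GRing.Theory Num.Theory.
Local Open Scope ring_scope.

Lemma big_uniq_restrict (R : Type) (idx : R) (op : Monoid.com_law idx)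
    (I : eqType) (s t : seq I) (F : I -> R) :
  uniq s -> uniq t -> {subset t <= s} ->
  {in s, forall y, y \notin t -> F y = idx} ->
  \big[op/idx]_(y <- s) F y = \big[op/idx]_(y <- t) F y.
Proof.
move=> us ut ts F0; rewrite -(@big_rmcond_in _ _ op _ s (mem t)) // -big_filter.
apply: perm_big; apply: uniq_perm => [||y]; [exact: filter_uniq | exact: ut |].
by rewrite mem_filter; apply/andP/idP => [[] //|ty]; split; [exact: ty | exact: ts].
Qed.

Lemma supnorm_box (n m : nat) :
  exists S : seq 'rV[int]_n, uniq S /\ forall al, al \in S <-> (supnorm al <= m)%N.
Proof.
pose shift (w : 'rV['I_(m + m).+1]_n) : 'rV[int]_n := \row_k (Posz (w ord0 k) - Posz m).
exists (undup [seq shift w | w <- enum 'rV['I_(m + m).+1]_n]).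
split=> [|al]; first exact: undup_uniq.
rewrite mem_undup; split=> [/mapP[w _ ->]|al_m].
  apply/bigmax_leqP => k _; rewrite mxE.
  by have := ltn_ord (w ord0 k); move: (nat_of_ord _) => q; lia.
have al_k k : (absz (al ord0 k) <= m)%N by move/bigmax_leqP: al_m; apply.
apply/mapP; exists (\row_k inord (absz (al ord0 k + Posz m)%R)); first by rewrite mem_enum.
apply/matrixP => i k; rewrite (ord1 i) !mxE inordK; move: (al ord0 k) (al_k k) => q; lia.
Qed.

Section PeriodicSpace.
Variables (n : nat) (X : periodic_dms n).
Local Notation N := (norb X).
Local Notation act := (@act _ X).
Local Notation orep := (@orep _ X).
Local Notation rho := (@rho _ X).

Lemma act_orep_inj a b i j : act a (orep i) = act b (orep j) -> a = b /\ i = j.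
Proof.
move=> eq_ab.
have eq_j : act (- b + a) (orep i) = orep j by rewrite actD eq_ab -actD addNr act0.
have ij := orep_distinct eq_j; subst j; split=> //.
by apply/eqP; rewrite -subr_eq0 addrC (act_free eq_j).
Qed.

Lemma xchoose_orep_cover_act a i : xchoose (orep_cover (act a (orep i))) = (a, i).
Proof.
have := xchooseP (orep_cover (act a (orep i))).
by case: xchoose => b j /= /eqP /act_orep_inj[-> ->].
Qed.

Lemma Uinv_act v a i : Uinv X v (act a (orep i)) = v a i ord0.
Proof. by rewrite /Uinv xchoose_orep_cover_act. Qed.

Lemma rho_act_translate a b x y : rho (act a x) (act b y) = rho (act (a - b) x) y.
Proof. by rewrite -(act_iso (- b)) -!actD addNr act0 addrC. Qed.

Lemma supnorm_bounded_near_orep (r : RR) :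
  exists m, forall c i j, rho (act c (orep i)) (orep j) <= r -> (supnorm c <= m)%N.
Proof.
have /fin_all_exists[ball ballP] :
    forall j, exists s : seq X, forall x, rho x (orep j) <= r -> x \in s.
  by move=> j; exact: balls_finite.
exists (\max_j \max_(z <- ball j) supnorm (xchoose (orep_cover z)).1).
move=> c i j /ballP ball_c; apply: leq_trans (leq_bigmax j).
have := @leq_bigmax_seq _ _ xpredT (fun z => supnorm (xchoose (orep_cover z)).1) _ ball_c isT.
by rewrite xchoose_orep_cover_act.
Qed.

Definition band_coef (k : X -> X -> CC) (al x : 'rV[int]_n) : 'M[CC]_N :=
  \matrix_(i, j) k (act x (orep i)) (act (x - al) (orep j)).

Lemma band_coef_linf k al : (exists M, forall x y, cabs (k x y) <= M) ->
  linf_mx (band_coef k al).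
Proof. by case=> M kM; exists M => x i j; rewrite mxE. Qed.

Definition orbit_block (S : seq 'rV[int]_n) : seq X :=
  [seq act b (orep j) | b <- S, j <- enum 'I_N].

Lemma uniq_orbit_block S : uniq S -> uniq (orbit_block S).
Proof.
move=> uS; apply: allpairs_uniq => //; first exact: enum_uniq.
by move=> [a i] [b j] _ _ /= /act_orep_inj[-> ->].
Qed.

Lemma Uinv_eq0_notin_orbit_block v sv :
  (forall b, b \notin sv -> v b = 0) ->
  forall y, y \notin orbit_block sv -> Uinv X v y = 0.
Proof.
move=> v0 y; have [[b j] /= /eqP <-] := orep_cover y.
rewrite Uinv_act; case: (boolP (b \in sv)) => [b_sv | /v0 -> _]; last by rewrite mxE.
by case/negP; apply: allpairs_f; rewrite ?mem_enum.
Qed.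

Variables (k : X -> X -> CC) (R : RR) (m : nat) (S : seq 'rV[int]_n).
Hypothesis k_band : forall x y, R < rho x y -> k x y = 0.
Hypothesis near_orep_m :
  forall c i j, rho (act c (orep i)) (orep j) <= R -> (supnorm c <= m)%N.
Hypothesis S_box : forall al, (supnorm al <= m)%N -> al \in S.

Lemma kernel_eq0_notin_orbit_block x i y :
  y \notin orbit_block [seq x - al | al <- S] -> k (act x (orep i)) y = 0.
Proof.
have [[b j] /= /eqP <-] := orep_cover y; move=> y_out; apply: k_band.
rewrite real_ltNge ?num_real //; apply: contra y_out.
rewrite rho_act_translate => /near_orep_m /S_box xb_S.
rewrite -[b](subKr x) /orbit_block allpairs_mapl.
by apply: allpairs_f; rewrite ?mem_enum.
Qed.

Lemma Uop_band_expansion A v :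
  generating_function A k -> uniq S -> finsupp v ->
  Uop X (A (Uinv X v)) = fun x => \sum_(al <- S) band_coef k al x *m Vsh al v x.
Proof.
move=> kA uS [sv v0]; apply: boolp.funext => x; apply/matrixP => i z.
rewrite (ord1 z) {z} /Uop mxE summxE.
set T := orbit_block [seq x - al | al <- S].
have uT : uniq T by rewrite uniq_orbit_block // map_inj_uniq // => a b /addrI/oppr_inj.
(* Padding the support of U^-1 v with T makes the restriction to T exact. *)
set sY := undup (orbit_block sv ++ T).
have -> : A (Uinv X v) (act x (orep i)) =
    \sum_(y <- T) k (act x (orep i)) y * Uinv X v y.
  rewrite (kA _ sY (undup_uniq _)) => [|y]; last first.
    by rewrite mem_undup mem_cat negb_or => /andP[/Uinv_eq0_notin_orbit_block->].
  apply: big_uniq_restrict => //; first exact: undup_uniq.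
    by move=> y yT; rewrite mem_undup mem_cat yT orbT.
  by move=> y _ /kernel_eq0_notin_orbit_block->; rewrite mul0r.
rewrite /T /orbit_block allpairs_mapl big_allpairs_dep.
apply: eq_bigr => al _; rewrite mxE big_enum /=.
by apply: eq_bigr => j _; rewrite !mxE Uinv_act.
Qed.

End PeriodicSpace.

Theorem proposition3p1 (n : nat) (X : periodic_dms n) (p : exponent)
    (A : (X -> CC) -> (X -> CC)) :
  valid_exponent p -> band_op p A ->
  exists (m : nat) (S : seq 'rV[int]_n)
         (a : 'rV[int]_n -> 'rV[int]_n -> 'M[CC]_(norb X)),
    [/\ uniq S,
        (forall al, al \in S <-> (supnorm al <= m)%N),
        (forall al, linf_mx (a al)) &
        (forall v : 'rV[int]_n -> 'cV[CC]_(norb X), finsupp v ->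
           Uop X (A (Uinv X v)) =
           (fun x => \sum_(al <- S) a al x *m Vsh al v x))].
Proof.
(* Neither p nor the boundedness of A on l^p matters: on finitely supported v,
   A acts through its kernel. *)
move=> _ [_ [k [kA [k_bounded [R [_ k_band]]]]]].
have [m near_orep_m] := supnorm_bounded_near_orep X R.
have [S [uS S_box]] := supnorm_box n m.
exists m, S, (band_coef k); split=> // [al|v]; first exact: band_coef_linf.
exact: (Uop_band_expansion (v := v) k_band near_orep_m (fun al => proj2 (S_box al)) kA uS).
Qed.
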